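(* The half line $\mathbb R_+=[0,\infty)$ (with the standard metric) is an absolute extensor in the category $\mathcal A$ and in the category $\tilde{\mathcal A}$.
   Context: A metric space is proper if all closed balls are compact; a map is proper if preimages of compact sets are compact; a map $f:X\to Y$ of metric spaces is asymptotically Lipschitz if there are $\lambda,s\ge0$ with $d_Y(f(x),f(x'))\le\lambda d_X(x,x')+s$ for all $x,x'$. The category $\mathcal A$ has proper metric spaces as objects and continuous proper asymptotically Lipschitz maps as morphisms. The category $\tilde{\mathcal A}$ has the same objects; its morphisms are morphisms $f:X\to Y$ of $\mathcal A$ with nonzero norm, meaning: for base points $x_0\in X$, $y_0\in Y$ there exist $c>0$, $b\ge0$ with $d_Y(f(x),y_0)\ge c\,d_X(x,x_0)-b$ for all $x\in X$ (this does not depend on the base points). An object $Y$ is an absolute extensor in such a category if for every object $X$, every closed subset $A\subset X$ with the induced metric, and every morphism $\phi:A\to Y$, there is a morphism $\bar\phi:X\to Y$ with $\bar\phi|_A=\phi$. *)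

From Stdlib Require Import Reals.
Open Scope R_scope.

Definition is_metric {X : Type} (d : X -> X -> R) : Prop :=
  (forall x y, 0 <= d x y) /\
  (forall x y, d x y = 0 <-> x = y) /\
  (forall x y, d x y = d y x) /\
  (forall x y z, d x z <= d x y + d y z).

Definition open_set {X : Type} (d : X -> X -> R) (U : X -> Prop) : Prop :=
  forall x, U x -> exists e, 0 < e /\ forall y, d x y < e -> U y.

Definition closed_set {X : Type} (d : X -> X -> R) (F : X -> Prop) : Prop :=
  open_set d (fun x => ~ F x).

Definition compact_set {X : Type} (d : X -> X -> R) (K : X -> Prop) : Prop :=
  forall (I : Type) (U : I -> X -> Prop),
    (forall i, open_set d (U i)) ->
    (forall x, K x -> exists i, U i x) ->
    exists l : list I, forall x, K x -> exists i, List.In i l /\ U i x.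

Definition closed_ball {X : Type} (d : X -> X -> R) (x : X) (r : R) : X -> Prop :=
  fun y => d x y <= r.

Definition proper_space {X : Type} (d : X -> X -> R) : Prop :=
  forall x r, compact_set d (closed_ball d x r).

Definition continuous_map {X Y : Type} (dX : X -> X -> R) (dY : Y -> Y -> R)
  (f : X -> Y) : Prop :=
  forall x e, 0 < e -> exists delta, 0 < delta /\
    forall x', dX x x' < delta -> dY (f x) (f x') < e.

Definition proper_map {X Y : Type} (dX : X -> X -> R) (dY : Y -> Y -> R)
  (f : X -> Y) : Prop :=
  forall K : Y -> Prop, compact_set dY K -> compact_set dX (fun x => K (f x)).

Definition asymptotically_lipschitz {X Y : Type} (dX : X -> X -> R)
  (dY : Y -> Y -> R) (f : X -> Y) : Prop :=
  exists lambda s, 0 <= lambda /\ 0 <= s /\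
    forall x x', dY (f x) (f x') <= lambda * dX x x' + s.

Definition morph_A {X Y : Type} (dX : X -> X -> R) (dY : Y -> Y -> R)
  (f : X -> Y) : Prop :=
  continuous_map dX dY f /\ proper_map dX dY f /\ asymptotically_lipschitz dX dY f.

(** Nonzero norm (stated for all base points; independent of them). *)
Definition nonzero_norm {X Y : Type} (dX : X -> X -> R) (dY : Y -> Y -> R)
  (f : X -> Y) : Prop :=
  forall (x0 : X) (y0 : Y), exists c b, 0 < c /\ 0 <= b /\
    forall x, dY (f x) y0 >= c * dX x x0 - b.

Definition morph_tA {X Y : Type} (dX : X -> X -> R) (dY : Y -> Y -> R)
  (f : X -> Y) : Prop :=
  morph_A dX dY f /\ nonzero_norm dX dY f.

Definition sub_dist {X : Type} (d : X -> X -> R) (A : X -> Prop) :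
  {x | A x} -> {x | A x} -> R :=
  fun a b => d (proj1_sig a) (proj1_sig b).

Definition Rplus_half := {r : R | 0 <= r}.
Definition dRplus (r s : Rplus_half) : R := Rabs (proj1_sig r - proj1_sig s).

Definition absolute_extensor
  (morph : forall (X Y : Type), (X -> X -> R) -> (Y -> Y -> R) -> (X -> Y) -> Prop)
  (Y : Type) (dY : Y -> Y -> R) : Prop :=
  forall (X : Type) (d : X -> X -> R),
    is_metric d -> proper_space d ->
    forall A : X -> Prop, closed_set d A ->
    forall phi : {x | A x} -> Y,
      morph _ _ (sub_dist d A) dY phi ->
      exists phibar : X -> Y,
        morph _ _ d dY phibar /\ forall a : {x | A x}, phibar (proj1_sig a) = phi a.

(* Let [lam], [s] be the asymptotic Lipschitz constants of [phi : A -> R+]. Off [A] put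
     ext x = inf_(a in A) phi a + (lam + 1) d(x, a) + (s + 1) pen(x, a),
   where pen(x, a) = min (2 d(x, A), d(x, a)) / d(x, A) - 1 lies in [0, 1], is small for
   nearly closest points of [A] and equals 1 beyond twice the distance to [A].  The slope
   [lam + 1] makes [ext] asymptotically Lipschitz, bounds its sublevel sets (so [ext] is
   proper, [X] being proper) and passes a linear lower bound from [phi] to [ext].  The
   penalty is what gives continuity at points of [A]: without it, points of [A] at moderate
   distance could undercut [phi] by up to [s].  If [A] is empty, the distance to a point of
   [X] serves. *)

From Stdlib Require Import Reals Lra List Classical ClassicalEpsilon ProofIrrelevance.
Open Scope R_scope.

Definition is_inf {T : Type} (h : T -> R) (m : R) : Prop :=
  (forall t, m <= h t) /\ (forall m', (forall t, m' <= h t) -> m' <= m).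

Definition Inf {T : Type} (h : T -> R) : R :=
  match excluded_middle_informative (exists m, is_inf h m) with
  | left H => proj1_sig (constructive_indefinite_description _ H)
  | right _ => 0
  end.

Section Infimum.
Context {T : Type} (t0 : T) (h : T -> R) (lb : R) (h_ge_lb : forall t, lb <= h t).

Lemma Inf_is_inf : is_inf h (Inf h).
Proof.
  assert (Hex : exists m, is_inf h m).
  { destruct (completeness (fun y => exists t, y = - h t)) as [m [Hub Hlub]].
    - exists (- lb). intros y [t ->]. specialize (h_ge_lb t). lra.
    - exists (- h t0). eauto.
    - exists (- m). split.
      + intros t. assert (- h t <= m) by (apply Hub; eauto). lra.
      + intros m' Hm'. assert (m <= - m'); [|lra].
        apply Hlub. intros y [t ->]. specialize (Hm' t). lra. }
  unfold Inf. destruct excluded_middle_informative as [H|H]; [|contradiction].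
  exact (proj2_sig (constructive_indefinite_description _ H)).
Qed.

Lemma Inf_le t : Inf h <= h t.
Proof. apply Inf_is_inf. Qed.

Lemma Inf_glb m : (forall t, m <= h t) -> m <= Inf h.
Proof. apply Inf_is_inf. Qed.

Lemma Inf_approx e : 0 < e -> exists t, h t < Inf h + e.
Proof.
  intros He. apply NNPP. intros Hno.
  assert (Inf h + e <= Inf h); [|lra].
  apply Inf_glb. intros t. apply Rnot_lt_le. intros Ht. eauto.
Qed.

End Infimum.

Lemma Inf_close {T : Type} (t0 : T) (h1 h2 : T -> R) (lb c : R) :
  (forall t, lb <= h1 t) -> (forall t, lb <= h2 t) ->
  (forall t, Rabs (h1 t - h2 t) <= c) -> Rabs (Inf h1 - Inf h2) <= c.
Proof.
  intros H1 H2 Hc. apply Rabs_le. split.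
  - assert (Inf h2 - c <= Inf h1); [|lra]. apply (Inf_glb t0 h1 lb H1). intros t.
    pose proof (Inf_le t0 h2 lb H2 t). pose proof (Hc t). split_Rabs; lra.
  - assert (Inf h1 - c <= Inf h2); [|lra]. apply (Inf_glb t0 h2 lb H2). intros t.
    pose proof (Inf_le t0 h1 lb H1 t). pose proof (Hc t). split_Rabs; lra.
Qed.

Lemma metric_dist_lipschitz {X : Type} (d : X -> X -> R) (x y z : X) :
  is_metric d -> Rabs (d x z - d y z) <= d x y.
Proof.
  intros (_ & _ & Hsym & Htri). pose proof (Htri x y z). pose proof (Htri y x z).
  rewrite (Hsym y x) in *. split_Rabs; lra.
Qed.

Lemma In_le_list_max (l : list nat) (n : nat) : In n l -> (n <= list_max l)%nat.
Proof.
  intros Hin. assert (Hall : Forall (fun k => (k <= list_max l)%nat) l)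
    by (apply list_max_le; constructor).
  rewrite Forall_forall in Hall. auto.
Qed.

Lemma compact_closed_subset {X : Type} (d : X -> X -> R) (K P : X -> Prop) :
  compact_set d K -> closed_set d P -> (forall x, P x -> K x) -> compact_set d P.
Proof.
  intros HK HP HPK I U HU Hcov.
  set (V := fun o : option I => match o with Some i => U i | None => fun x => ~ P x end).
  destruct (HK (option I) V) as [l Hl].
  - intros [i|]; [apply HU | apply HP].
  - intros x Kx. destruct (classic (P x)) as [Px|nPx].
    + destruct (Hcov x Px) as [i Hi]. now exists (Some i).
    + now exists None.
  - exists (flat_map (fun o => match o with Some i => i :: nil | None => nil end) l).
    intros x Px. destruct (Hl x (HPK x Px)) as [[i|] [Hin Hi]]; [|contradiction].
    exists i. split; [|exact Hi]. apply in_flat_map. exists (Some i). simpl. auto.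
Qed.

Lemma compact_bounded {X : Type} (d : X -> X -> R) (K : X -> Prop) (x0 : X) :
  (forall x y z, d x z <= d x y + d y z) ->
  compact_set d K -> exists M, forall x, K x -> d x0 x <= M.
Proof.
  intros Htri HK.
  destruct (HK nat (fun n x => d x0 x < INR n)) as [l Hl].
  - intros n x Hx. exists (INR n - d x0 x). split; [lra|].
    intros y Hy. pose proof (Htri x0 x y). lra.
  - intros x _. destruct (INR_unbounded (d x0 x)) as [n Hn]. eauto.
  - exists (INR (list_max l)). intros x Kx. destruct (Hl x Kx) as [n [Hin Hn]].
    pose proof (le_INR _ _ (In_le_list_max l n Hin)). lra.
Qed.

Lemma compact_closed {X : Type} (d : X -> X -> R) (K : X -> Prop) :
  is_metric d -> compact_set d K -> closed_set d K.
Proof.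
  intros (Hpos & Hzero & Hsym & Htri) HK y nKy.
  destruct (HK nat (fun n z => / INR (S n) < d y z)) as [l Hl].
  - intros n x Hx. exists (d y x - / INR (S n)). split; [lra|].
    intros z Hz. pose proof (Htri y z x). rewrite (Hsym z x) in *. lra.
  - intros z Kz.
    assert (Hyz : 0 < d y z).
    { destruct (Hpos y z) as [H|H]; [exact H|].
      symmetry in H. apply Hzero in H. subst. contradiction. }
    destruct (INR_unbounded (/ d y z)) as [n Hn]. exists n.
    rewrite <- (Rinv_inv (d y z)). apply Rinv_lt_contravar.
    + pose proof (pos_INR n). rewrite S_INR.
      apply Rmult_lt_0_compat; [apply Rinv_0_lt_compat|]; lra.
    + rewrite S_INR. lra.
  - exists (/ INR (S (list_max l))). split.
    + apply Rinv_0_lt_compat, lt_0_INR. auto with arith.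
    + intros z Hz Kz. destruct (Hl z Kz) as [n [Hin Hn]].
      assert (/ INR (S (list_max l)) <= / INR (S n)); [|lra].
      apply Rinv_le_contravar; [apply lt_0_INR; auto with arith|].
      apply le_INR. pose proof (In_le_list_max l n Hin). auto with arith.
Qed.

Definition half_point (r : R) (Hr : 0 <= r) : Rplus_half := exist _ r Hr.

Lemma half_line_eq (u v : Rplus_half) : proj1_sig u = proj1_sig v -> u = v.
Proof. destruct u, v; simpl; intros ->. f_equal. apply proof_irrelevance. Qed.

Lemma dRplus_metric : is_metric dRplus.
Proof.
  unfold dRplus. split; [|split; [|split]].
  - intros; apply Rabs_pos.
  - intros x y; split.
    + intros H. apply half_line_eq. split_Rabs; lra.
    + intros ->. rewrite Rminus_diag, Rabs_R0. reflexivity.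
  - intros x y. split_Rabs; lra.
  - intros x y z. split_Rabs; lra.
Qed.

Lemma half_line_interval_compact (r : R) :
  compact_set dRplus (fun y : Rplus_half => proj1_sig y <= r).
Proof.
  intros I U HU Hcov.
  destruct (Rlt_or_le r 0) as [Hneg|Hnn].
  { exists nil. intros [y Hy] Hy'. simpl in Hy'. exfalso. lra. }
  destruct (Hcov (half_point 0 (Rle_refl 0)) Hnn) as [i0 _].
  (* Transport the cover to [0, r] in R along the 1-Lipschitz retraction max 0. *)
  set (rp := fun x : R => half_point (Rmax 0 x) (Rmax_l 0 x)).
  set (c := fun x : R =>
    match excluded_middle_informative (exists i, U i (rp x)) with
    | left h => proj1_sig (constructive_indefinite_description _ h)
    | right _ => i0
    end).
  assert (Hc : forall x, (exists i, U i (rp x)) -> U (c x) (rp x)).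
  { intros x h. unfold c. destruct excluded_middle_informative as [h'|h']; [|contradiction].
    exact (proj2_sig (constructive_indefinite_description _ h')). }
  assert (Hfam : forall x, (exists y, 0 <= x <= r /\ U (c x) (rp y)) -> 0 <= x <= r).
  { intros x [y [Hx _]]. exact Hx. }
  destruct (compact_P3 0 r
    (mkfamily (fun x => 0 <= x <= r) (fun x y => 0 <= x <= r /\ U (c x) (rp y)) Hfam))
    as [D [Dcov [l Hl]]].
  - split.
    + intros x Hx. exists x. simpl. split; [exact Hx|]. apply Hc.
      apply Hcov. simpl. unfold Rmax. destruct Rle_dec; lra.
    + intros x y [Hx Hxy]. destruct (HU (c x) (rp y) Hxy) as [e [He He']].
      exists (mkposreal e He). intros z Hz. unfold disc in Hz. simpl in Hz. split; [exact Hx|].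
      apply He'. unfold dRplus. simpl. unfold Rmax. repeat destruct Rle_dec; split_Rabs; lra.
  - exists (map c l). intros [y Hy] Hyr. simpl in Hyr.
    destruct (Dcov y (conj Hy Hyr)) as [x [[Hx Hxy] Dx]].
    exists (c x). split; [apply in_map, Hl; split; assumption|].
    assert (Hry : rp y = exist (fun r => 0 <= r) y Hy)
      by (apply half_line_eq; simpl; apply Rmax_right, Hy).
    rewrite <- Hry. exact Hxy.
Qed.

Definition bounded_sublevel_sets {X : Type} (d : X -> X -> R) (G : X -> R) : Prop :=
  forall r, exists M, forall x y, G x <= r -> G y <= r -> d x y <= M.

Lemma proper_map_to_half_line {X : Type} (d : X -> X -> R) (g : X -> Rplus_half) :
  proper_space d -> continuous_map d dRplus g ->
  bounded_sublevel_sets d (fun x => proj1_sig (g x)) -> proper_map d dRplus g.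
Proof.
  intros Hp Hcont Hsub K HK.
  destruct (compact_bounded dRplus K (half_point 0 (Rle_refl 0))
    (proj2 (proj2 (proj2 dRplus_metric))) HK) as [M HM].
  destruct (classic (exists x1, K (g x1))) as [[x1 Hx1]|Hempty].
  2: { intros I U _ _. exists nil. intros x Kx. exfalso. eauto. }
  assert (Hle : forall x, K (g x) -> proj1_sig (g x) <= M).
  { intros x Kx. specialize (HM _ Kx). unfold dRplus in HM. simpl in HM.
    pose proof (proj2_sig (g x)). split_Rabs; lra. }
  destruct (Hsub M) as [M' HM'].
  apply (compact_closed_subset d (closed_ball d x1 M')); [apply Hp| |].
  - intros x nKx. destruct (compact_closed dRplus K dRplus_metric HK (g x) nKx) as [e [He He']].
    destruct (Hcont x e He) as [del [Hdel H]]. eauto.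
  - intros x Kx. apply HM'; auto.
Qed.

Lemma nonzero_norm_of_base_points {X Y : Type} (dX : X -> X -> R) (dY : Y -> Y -> R)
    (f : X -> Y) (x1 : X) (y1 : Y) (c b : R) :
  is_metric dX -> is_metric dY -> 0 < c ->
  (forall x, c * dX x x1 - b <= dY (f x) y1) -> nonzero_norm dX dY f.
Proof.
  intros (HXpos & _ & HXsym & HXtri) (HYpos & _ & HYsym & HYtri) Hc Hf x0 y0.
  exists c, (Rabs b + dY y1 y0 + c * dX x0 x1). split; [exact Hc|split].
  - pose proof (Rabs_pos b). pose proof (HYpos y1 y0).
    pose proof (Rmult_le_pos c _ (Rlt_le _ _ Hc) (HXpos x0 x1)). lra.
  - intros x. apply Rle_ge. specialize (Hf x).
    pose proof (HYtri (f x) y0 y1). rewrite (HYsym y0 y1) in *.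
    pose proof (HXtri x x1 x0) as Htri. rewrite (HXsym x1 x0) in Htri.
    apply (Rmult_le_compat_l c) in Htri; [|lra].
    pose proof (Rle_abs b). lra.
Qed.

Definition penalty (p u : R) : R := Rmin (2 * p) u / p - 1.

Lemma penalty_bounds (p u : R) : 0 < p -> p <= u -> 0 <= penalty p u <= 1.
Proof.
  intros Hp Hu. unfold penalty.
  assert (p <= Rmin (2 * p) u <= 2 * p) by (unfold Rmin; destruct Rle_dec; lra).
  assert (1 <= Rmin (2 * p) u / p <= 2); [|lra].
  split; [apply Rmult_le_reg_r with p | apply Rmult_le_reg_r with p];
    unfold Rdiv; rewrite ?Rmult_assoc, ?Rinv_l; lra.
Qed.

Lemma penalty_far (p u : R) : 0 < p -> 2 * p <= u -> penalty p u = 1.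
Proof. intros Hp Hu. unfold penalty. rewrite Rmin_left by exact Hu. field. lra. Qed.

Lemma penalty_near (p u ep : R) : 0 < p -> u <= p * (1 + ep) -> penalty p u <= ep.
Proof.
  intros Hp Hu. unfold penalty.
  assert (Rmin (2 * p) u / p <= 1 + ep); [|lra].
  apply Rmult_le_reg_r with p; [exact Hp|].
  unfold Rdiv. rewrite Rmult_assoc, Rinv_l by lra. pose proof (Rmin_r (2 * p) u). lra.
Qed.

Lemma penalty_lipschitz (p q u v del : R) : 0 < p -> 0 < q -> 0 <= v ->
  Rabs (p - q) <= del -> Rabs (u - v) <= del -> Rabs (penalty p u - penalty q v) <= 4 * del / p.
Proof.
  intros Hp Hq Hv Hpq Huv. unfold penalty.
  set (m1 := Rmin (2 * p) u). set (m2 := Rmin (2 * q) v).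
  assert (Hm : Rabs (m1 - m2) <= 2 * del)
    by (unfold m1, m2, Rmin; repeat destruct Rle_dec; split_Rabs; lra).
  assert (Hm2 : 0 <= m2 <= 2 * q) by (unfold m2, Rmin; destruct Rle_dec; lra).
  set (t := m2 / q).
  assert (Ht : 0 <= t <= 2).
  { unfold t. split; [apply Rmult_le_pos; [lra | left; apply Rinv_0_lt_compat; lra]|].
    apply Rmult_le_reg_r with q; [lra|]. unfold Rdiv. rewrite Rmult_assoc, Rinv_l; lra. }
  assert (Hsplit : m1 / p - 1 - (t - 1) = ((m1 - m2) + t * (q - p)) / p)
    by (unfold t; field; lra).
  rewrite Hsplit.
  unfold Rdiv. rewrite Rabs_mult, (Rabs_pos_eq (/ p)) by (left; apply Rinv_0_lt_compat; lra).
  apply Rmult_le_compat_r; [left; apply Rinv_0_lt_compat; lra|].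
  eapply Rle_trans; [apply Rabs_triang|]. rewrite Rabs_mult, (Rabs_pos_eq t) by lra.
  assert (t * Rabs (q - p) <= 2 * del); [|lra].
  rewrite Rabs_minus_sym. apply Rmult_le_compat; try lra. apply Rabs_pos.
Qed.

Section Extension.

Variables (X : Type) (d : X -> X -> R) (A : X -> Prop).
Variables (phi : {x | A x} -> Rplus_half) (a0 : {x | A x}) (lam s : R).
Hypothesis d_metric : is_metric d.
Hypothesis A_closed : closed_set d A.
Hypothesis lam_nonneg : 0 <= lam.
Hypothesis s_nonneg : 0 <= s.
Hypothesis phi_lip : forall a b, dRplus (phi a) (phi b) <= lam * sub_dist d A a b + s.

Let dpos (x y : X) : 0 <= d x y. Proof. apply d_metric. Qed.
Let dsym (x y : X) : d x y = d y x. Proof. apply d_metric. Qed.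
Let dtri (x y z : X) : d x z <= d x y + d y z. Proof. apply d_metric. Qed.
Let dxx (x : X) : d x x = 0. Proof. apply d_metric. reflexivity. Qed.

Definition phi_val (a : {x | A x}) : R := proj1_sig (phi a).

Definition dist_to_A (x : X) : R := Inf (fun a : {x | A x} => d x (proj1_sig a)).

Definition cost (x : X) (a : {x | A x}) : R :=
  phi_val a + (lam + 1) * d x (proj1_sig a)
  + (s + 1) * penalty (dist_to_A x) (d x (proj1_sig a)).

Definition ext (x : X) : R :=
  match excluded_middle_informative (A x) with
  | left Ax => phi_val (exist _ x Ax)
  | right _ => Inf (cost x)
  end.

Lemma phi_val_nonneg (a : {x | A x}) : 0 <= phi_val a.
Proof. exact (proj2_sig (phi a)). Qed.

Lemma phi_val_le (a b : {x | A x}) : phi_val b <= phi_val a + lam * d (proj1_sig a) (proj1_sig b) + s.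
Proof. pose proof (phi_lip a b) as H. unfold dRplus, sub_dist in H. unfold phi_val. split_Rabs; lra. Qed.

Lemma dist_to_A_le (x : X) (a : {x | A x}) : dist_to_A x <= d x (proj1_sig a).
Proof. exact (Inf_le a0 _ 0 (fun _ => dpos _ _) a). Qed.

Lemma dist_to_A_approx (x : X) (e : R) :
  0 < e -> exists a : {x | A x}, d x (proj1_sig a) < dist_to_A x + e.
Proof. exact (Inf_approx a0 _ 0 (fun _ => dpos _ _) e). Qed.

Lemma dist_to_A_pos (x : X) : ~ A x -> 0 < dist_to_A x.
Proof.
  intros nAx. destruct (A_closed x nAx) as [e [He Hball]].
  assert (e <= dist_to_A x); [|lra].
  apply (Inf_glb a0 _ 0 (fun _ => dpos _ _)). intros [y Ay]. simpl.
  apply Rnot_lt_le. intros Hy. exact (Hball y Hy Ay).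
Qed.

Lemma dist_to_A_lipschitz (x y : X) : Rabs (dist_to_A x - dist_to_A y) <= d x y.
Proof.
  apply (Inf_close a0 _ _ 0); intros; [apply dpos | apply dpos | apply metric_dist_lipschitz, d_metric].
Qed.

Lemma cost_bounds (x : X) (a : {x | A x}) : ~ A x ->
  phi_val a + (lam + 1) * d x (proj1_sig a) <= cost x a
  <= phi_val a + (lam + 1) * d x (proj1_sig a) + (s + 1).
Proof.
  intros nAx. unfold cost.
  pose proof (penalty_bounds _ _ (dist_to_A_pos x nAx) (dist_to_A_le x a)).
  assert (0 <= (s + 1) * penalty (dist_to_A x) (d x (proj1_sig a)) <= s + 1); [|lra].
  split; [apply Rmult_le_pos; lra|]. rewrite <- (Rmult_1_r (s + 1)) at 2.
  apply Rmult_le_compat_l; lra.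
Qed.

Lemma cost_nonneg (x : X) (a : {x | A x}) : ~ A x -> 0 <= cost x a.
Proof.
  intros nAx. pose proof (cost_bounds x a nAx). pose proof (phi_val_nonneg a).
  pose proof (Rmult_le_pos (lam + 1) _ ltac:(lra) (dpos x (proj1_sig a))). lra.
Qed.

Lemma ext_in_A (x : X) (Ax : A x) : ext x = phi_val (exist A x Ax).
Proof.
  unfold ext. destruct excluded_middle_informative as [Ax'|]; [|contradiction].
  f_equal. f_equal. apply proof_irrelevance.
Qed.

Lemma ext_off_A (x : X) : ~ A x -> ext x = Inf (cost x).
Proof. intros nAx. unfold ext. destruct excluded_middle_informative; [contradiction|reflexivity]. Qed.

Lemma ext_le (x : X) (a : {x | A x}) : ext x <= phi_val a + (lam + 1) * d x (proj1_sig a) + (s + 1).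
Proof.
  destruct (classic (A x)) as [Ax|nAx].
  - rewrite (ext_in_A x Ax).
    pose proof (phi_val_le a (exist A x Ax)). simpl in *. rewrite (dsym (proj1_sig a) x) in *.
    pose proof (dpos x (proj1_sig a)). lra.
  - rewrite (ext_off_A x nAx). eapply Rle_trans; [apply (Inf_le a0 _ 0 (fun b => cost_nonneg x b nAx))|].
    apply cost_bounds, nAx.
Qed.

Lemma ext_glb (x : X) (m : R) : (forall a, m <= phi_val a + (lam + 1) * d x (proj1_sig a)) -> m <= ext x.
Proof.
  intros Hm. destruct (classic (A x)) as [Ax|nAx].
  - specialize (Hm (exist A x Ax)). rewrite (ext_in_A x Ax).
    simpl in Hm. rewrite dxx in Hm. lra.
  - rewrite (ext_off_A x nAx). apply (Inf_glb a0 _ 0 (fun a => cost_nonneg x a nAx)).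
    intros a. specialize (Hm a). pose proof (cost_bounds x a nAx). lra.
Qed.

Lemma ext_nonneg (x : X) : 0 <= ext x.
Proof.
  apply ext_glb. intros a. pose proof (phi_val_nonneg a).
  pose proof (Rmult_le_pos (lam + 1) _ ltac:(lra) (dpos x (proj1_sig a))). lra.
Qed.

Lemma ext_approx (x : X) :
  exists a : {x | A x}, phi_val a + (lam + 1) * d x (proj1_sig a) <= ext x + 1.
Proof.
  destruct (classic (A x)) as [Ax|nAx].
  - exists (exist A x Ax). rewrite (ext_in_A x Ax). simpl. rewrite dxx. lra.
  - rewrite (ext_off_A x nAx).
    destruct (Inf_approx a0 (cost x) 0 (fun a => cost_nonneg x a nAx) 1 Rlt_0_1) as [a Ha].
    exists a. pose proof (cost_bounds x a nAx). lra.
Qed.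

Lemma ext_asymptotically_lipschitz : asymptotically_lipschitz d Rdist ext.
Proof.
  assert (Hone_sided : forall x y, ext y <= ext x + (lam + 1) * d x y + (s + 1)).
  { intros x y. destruct (classic (A x)) as [Ax|nAx].
    - rewrite (ext_in_A x Ax), (dsym x y). apply ext_le.
    - assert (ext y - (lam + 1) * d x y - (s + 1) <= ext x); [|lra].
      apply ext_glb. intros a. pose proof (ext_le y a).
      pose proof (Rmult_le_compat_l (lam + 1) _ _ ltac:(lra) (dtri y x (proj1_sig a))).
      rewrite (dsym y x) in *. lra. }
  exists (lam + 1), (s + 1). split; [lra|split; [lra|]].
  intros x y. unfold Rdist. pose proof (Hone_sided x y). pose proof (Hone_sided y x).
  rewrite (dsym y x) in *. split_Rabs; lra.
Qed.

Lemma ext_locally_lipschitz_off_A (x y : X) : ~ A x -> d x y < dist_to_A x ->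
  Rabs (ext x - ext y) <= ((lam + 1) + 4 * (s + 1) / dist_to_A x) * d x y.
Proof.
  intros nAx Hxy. pose proof (dist_to_A_pos x nAx) as Hpx.
  assert (nAy : ~ A y) by (intros Ay; pose proof (dist_to_A_le x (exist A y Ay)); simpl in *; lra).
  pose proof (dist_to_A_pos y nAy) as Hpy.
  rewrite (ext_off_A x nAx), (ext_off_A y nAy).
  apply (Inf_close a0 _ _ 0 _ (fun a => cost_nonneg x a nAx) (fun a => cost_nonneg y a nAy)).
  intros a. unfold cost.
  pose proof (metric_dist_lipschitz d x y (proj1_sig a) d_metric) as Hdist.
  pose proof (penalty_lipschitz _ _ _ _ _ Hpx Hpy (dpos y (proj1_sig a))
    (dist_to_A_lipschitz x y) Hdist) as Hpen.
  set (u := d x (proj1_sig a)) in *. set (v := d y (proj1_sig a)) in *.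
  set (pu := penalty (dist_to_A x) u) in *. set (pv := penalty (dist_to_A y) v) in *.
  replace (phi_val a + (lam + 1) * u + (s + 1) * pu - (phi_val a + (lam + 1) * v + (s + 1) * pv))
    with ((lam + 1) * (u - v) + (s + 1) * (pu - pv)) by ring.
  eapply Rle_trans; [apply Rabs_triang|].
  rewrite !Rabs_mult, (Rabs_pos_eq (lam + 1)), (Rabs_pos_eq (s + 1)) by lra.
  replace (((lam + 1) + 4 * (s + 1) / dist_to_A x) * d x y)
    with ((lam + 1) * d x y + (s + 1) * (4 * d x y / dist_to_A x)) by (field; lra).
  apply Rplus_le_compat; apply Rmult_le_compat_l; lra.
Qed.

Lemma ext_ge_near_A (a : {x | A x}) (y : X) (del e : R) : ~ A y -> 0 <= e ->
  (forall c : {x | A x}, d (proj1_sig a) (proj1_sig c) < del -> phi_val a - e <= phi_val c) ->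
  3 * d (proj1_sig a) y <= del -> lam * d (proj1_sig a) y <= 1 -> phi_val a - e <= ext y.
Proof.
  intros nAy He Hnear Hdel Hlam. rewrite (ext_off_A y nAy).
  apply (Inf_glb a0 _ 0 (fun c => cost_nonneg y c nAy)). intros c.
  pose proof (cost_bounds y c nAy) as Hcost.
  set (x := proj1_sig a) in *. set (z := proj1_sig c) in *.
  destruct (Rlt_or_le (d x z) del) as [Hxz|Hxz].
  - specialize (Hnear c Hxz). pose proof (Rmult_le_pos (lam + 1) _ ltac:(lra) (dpos y z)). lra.
  - (* far from [x], the penalty is full and absorbs the constant [s] *)
    assert (Hyz : 2 * dist_to_A y <= d y z).
    { pose proof (dist_to_A_le y a) as Hp. fold x in Hp. rewrite (dsym y x) in Hp.
      pose proof (dtri x y z). lra. }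
    unfold cost. fold z. rewrite (penalty_far _ _ (dist_to_A_pos y nAy) Hyz).
    pose proof (phi_val_le c a) as Hlip. fold x z in Hlip.
    pose proof (Rmult_le_compat_l lam _ _ lam_nonneg (dtri z y x)).
    rewrite (dsym z x), (dsym z y), (dsym y x) in *. pose proof (dpos y z). lra.
Qed.

Lemma ext_le_near_A (a : {x | A x}) (y : X) (del e : R) : ~ A y ->
  (forall c : {x | A x}, d (proj1_sig a) (proj1_sig c) < del -> phi_val c <= phi_val a + e) ->
  3 * d (proj1_sig a) y < del -> ext y <= phi_val a + e + 2 * (lam + 1) * d (proj1_sig a) y.
Proof.
  intros nAy Hnear Hdel. apply Rle_plus_epsilon. intros eps Heps.
  pose proof (dist_to_A_pos y nAy) as Hp. set (p := dist_to_A y) in *.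
  set (ep := Rmin 1 (eps / (s + 1))).
  assert (Hep : 0 < ep) by (apply Rmin_glb_lt; [lra|apply Rdiv_lt_0_compat; lra]).
  assert (Hep1 : ep <= 1) by apply Rmin_l.
  assert (Hepeps : (s + 1) * ep <= eps).
  { pose proof (Rmin_r 1 (eps / (s + 1))) as H. apply (Rmult_le_compat_l (s + 1)) in H; [|lra].
    fold ep in H. replace ((s + 1) * (eps / (s + 1))) with eps in H by (field; lra). exact H. }
  destruct (dist_to_A_approx y (p * ep) ltac:(apply Rmult_lt_0_compat; lra)) as [b Hb].
  fold p in Hb. set (x := proj1_sig a) in *. set (z := proj1_sig b) in *.
  assert (Hyz : d y z <= 2 * d x y).
  { pose proof (dist_to_A_le y a) as Hpa. fold x p in Hpa. rewrite (dsym y x) in Hpa.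
    assert (p * ep <= p) by (rewrite <- (Rmult_1_r p) at 2; apply Rmult_le_compat_l; lra). lra. }
  assert (Hphib : phi_val b <= phi_val a + e) by (apply Hnear; fold x z; pose proof (dtri x y z); lra).
  assert (Hpen : penalty p (d y z) <= ep) by (apply penalty_near; [exact Hp | lra]).
  pose proof (Inf_le a0 _ 0 (fun c => cost_nonneg y c nAy) b) as Hinf.
  rewrite <- (ext_off_A y nAy) in Hinf. unfold cost in Hinf. fold p z in Hinf.
  pose proof (Rmult_le_compat_l (lam + 1) _ _ ltac:(lra) Hyz).
  pose proof (Rmult_le_compat_l (s + 1) _ _ ltac:(lra) Hpen). lra.
Qed.

Hypothesis phi_cont : continuous_map (sub_dist d A) dRplus phi.

Lemma ext_continuous_on_A (x : X) : A x -> forall e, 0 < e ->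
  exists del, 0 < del /\ forall y, d x y < del -> Rabs (ext x - ext y) < e.
Proof.
  intros Ax e He. set (a := exist A x Ax).
  destruct (phi_cont a (e / 3) ltac:(lra)) as [del1 [Hdel1 Hcont]].
  assert (Hnear : forall c, d x (proj1_sig c) < del1 -> Rabs (phi_val a - phi_val c) < e / 3)
    by (intros c Hc; apply (Hcont c Hc)).
  assert (Hlo : forall c, d x (proj1_sig c) < del1 -> phi_val a - e / 3 <= phi_val c)
    by (intros c Hc; specialize (Hnear c Hc); split_Rabs; lra).
  assert (Hhi : forall c, d x (proj1_sig c) < del1 -> phi_val c <= phi_val a + e / 3)
    by (intros c Hc; specialize (Hnear c Hc); split_Rabs; lra).
  exists (Rmin (del1 / 3) (Rmin (1 / (lam + 1)) (e / (6 * (lam + 1))))). split.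
  { repeat apply Rmin_glb_lt; apply Rdiv_lt_0_compat; lra. }
  intros y Hy. rewrite (ext_in_A x Ax). fold a.
  assert (Hy1 : d x y < del1 / 3) by (eapply Rlt_le_trans; [exact Hy | apply Rmin_l]).
  assert (Hy2 : d x y < 1 / (lam + 1))
    by (eapply Rlt_le_trans; [exact Hy|]; eapply Rle_trans; [apply Rmin_r | apply Rmin_l]).
  assert (Hy3 : d x y < e / (6 * (lam + 1)))
    by (eapply Rlt_le_trans; [exact Hy|]; eapply Rle_trans; apply Rmin_r).
  destruct (classic (A y)) as [Ay|nAy].
  { rewrite (ext_in_A y Ay). apply (Rlt_trans _ (e / 3)); [apply Hnear; simpl|]; lra. }
  apply (Rmult_lt_compat_l (lam + 1)) in Hy2, Hy3; try lra.
  replace ((lam + 1) * (1 / (lam + 1))) with 1 in Hy2 by (field; lra).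
  replace ((lam + 1) * (e / (6 * (lam + 1)))) with (e / 6) in Hy3 by (field; lra).
  pose proof (dpos x y).
  pose proof (ext_ge_near_A a y del1 (e / 3) nAy ltac:(lra) Hlo ltac:(simpl; lra) ltac:(simpl; lra)).
  pose proof (ext_le_near_A a y del1 (e / 3) nAy Hhi ltac:(simpl; lra)).
  simpl in *. apply Rabs_def1; lra.
Qed.

Lemma ext_continuous : continuous_map d Rdist ext.
Proof.
  intros x e He. unfold Rdist. destruct (classic (A x)) as [Ax|nAx].
  { exact (ext_continuous_on_A x Ax e He). }
  pose proof (dist_to_A_pos x nAx) as Hp.
  set (C := (lam + 1) + 4 * (s + 1) / dist_to_A x).
  assert (HC : 0 <= C) by (unfold C; pose proof (Rdiv_lt_0_compat (4 * (s + 1)) _ ltac:(lra) Hp); lra).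
  exists (Rmin (dist_to_A x) (e / (C + 1))). split.
  { apply Rmin_glb_lt; [exact Hp | apply Rdiv_lt_0_compat; lra]. }
  intros y Hy.
  assert (Hy1 : d x y < dist_to_A x) by (eapply Rlt_le_trans; [exact Hy | apply Rmin_l]).
  assert (Hy2 : d x y < e / (C + 1)) by (eapply Rlt_le_trans; [exact Hy | apply Rmin_r]).
  apply (Rmult_lt_compat_l (C + 1)) in Hy2; [|lra].
  replace ((C + 1) * (e / (C + 1))) with e in Hy2 by (field; lra).
  pose proof (ext_locally_lipschitz_off_A x y nAx Hy1) as Hloc. fold C in Hloc.
  pose proof (dpos x y). nra.
Qed.

Hypothesis phi_proper : proper_map (sub_dist d A) dRplus phi.

Lemma ext_bounded_sublevel_sets : bounded_sublevel_sets d ext.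
Proof.
  intros r.
  destruct (compact_bounded (sub_dist d A) _ a0 (fun x y z => dtri _ _ _)
    (phi_proper _ (half_line_interval_compact (r + 1)))) as [M HM].
  assert (Hball : forall x, ext x <= r -> d x (proj1_sig a0) <= r + 1 + M).
  { intros x Hx. destruct (ext_approx x) as [a Ha].
    pose proof (phi_val_nonneg a). pose proof (dpos x (proj1_sig a)).
    assert (Ha0 : d (proj1_sig a0) (proj1_sig a) <= M) by (apply HM; unfold phi_val in *; nra).
    pose proof (dtri x (proj1_sig a) (proj1_sig a0)). rewrite (dsym (proj1_sig a) (proj1_sig a0)) in *.
    nra. }
  exists (2 * (r + 1 + M)). intros x y Hx Hy.
  pose proof (Hball x Hx). pose proof (Hball y Hy).
  pose proof (dtri x (proj1_sig a0) y). rewrite (dsym (proj1_sig a0) y) in *. lra.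
Qed.

Lemma ext_linear_growth (c b : R) : 0 < c ->
  (forall a, c * d (proj1_sig a) (proj1_sig a0) - b <= phi_val a) ->
  forall x, Rmin c (lam + 1) * d x (proj1_sig a0) - b <= ext x.
Proof.
  intros Hc Hphi x. apply ext_glb. intros a. specialize (Hphi a).
  set (m := Rmin c (lam + 1)).
  assert (Hm : 0 <= m <= c /\ m <= lam + 1)
    by (unfold m; pose proof (Rmin_l c (lam + 1)); pose proof (Rmin_r c (lam + 1));
        pose proof (Rmin_glb_lt c (lam + 1) 0 Hc ltac:(lra)); lra).
  pose proof (Rmult_le_compat_l m _ _ ltac:(lra) (dtri x (proj1_sig a) (proj1_sig a0))).
  pose proof (Rmult_le_compat_r _ _ _ (dpos (proj1_sig a) (proj1_sig a0)) (proj2 (proj1 Hm))).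
  pose proof (Rmult_le_compat_r _ _ _ (dpos x (proj1_sig a)) (proj2 Hm)).
  lra.
Qed.

Definition ext_point (x : X) : Rplus_half := half_point (ext x) (ext_nonneg x).

Lemma ext_point_extends (a : {x | A x}) : ext_point (proj1_sig a) = phi a.
Proof. apply half_line_eq. destruct a as [x Ax]. simpl. rewrite (ext_in_A x Ax). reflexivity. Qed.

Lemma ext_point_morph_A : proper_space d -> morph_A d dRplus ext_point.
Proof.
  intros Hp. split; [|split].
  - exact ext_continuous.
  - apply proper_map_to_half_line; [exact Hp | exact ext_continuous | exact ext_bounded_sublevel_sets].
  - exact ext_asymptotically_lipschitz.
Qed.

Lemma ext_point_nonzero_norm :
  nonzero_norm (sub_dist d A) dRplus phi -> nonzero_norm d dRplus ext_point.
Proof.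
  intros Hnz. set (o := half_point 0 (Rle_refl 0)).
  destruct (Hnz a0 o) as (c & b & Hc & _ & Hphi).
  apply (nonzero_norm_of_base_points d dRplus ext_point (proj1_sig a0) o (Rmin c (lam + 1)) b
    d_metric dRplus_metric).
  - apply Rmin_glb_lt; lra.
  - intros x. unfold dRplus. simpl. rewrite Rminus_0_r, Rabs_pos_eq by apply ext_nonneg.
    apply ext_linear_growth; [exact Hc|]. intros a. specialize (Hphi a).
    unfold dRplus, sub_dist in Hphi. simpl in Hphi. rewrite Rminus_0_r, Rabs_pos_eq in Hphi
      by apply phi_val_nonneg. unfold phi_val. lra.
Qed.

End Extension.

Lemma half_line_morph_tA_exists {X : Type} (d : X -> X -> R) :
  is_metric d -> proper_space d -> exists g : X -> Rplus_half, morph_tA d dRplus g.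
Proof.
  intros Hd Hp. destruct (classic (inhabited X)) as [[x0]|nX].
  2: { exists (fun _ => half_point 0 (Rle_refl 0)).
       repeat split; try (intros x; exfalso; exact (nX (inhabits x))).
       - intros K _ I U _ _. exists nil. intros x. exfalso. exact (nX (inhabits x)).
       - exists 0, 0. repeat split; try lra. intros x. exfalso. exact (nX (inhabits x)). }
  pose proof Hd as (Hpos & _ & Hsym & Htri).
  set (g := fun x => half_point (d x x0) (Hpos x x0)).
  assert (Hg : forall x y, dRplus (g x) (g y) <= d x y).
  { intros x y. unfold dRplus. simpl. apply metric_dist_lipschitz. exact Hd. }
  exists g. split; [split; [|split]|].
  - intros x e He. exists e. split; [exact He|]. intros y Hy. pose proof (Hg x y). lra.
  - apply proper_map_to_half_line; [exact Hp| |].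
    + intros x e He. exists e. split; [exact He|]. intros y Hy. pose proof (Hg x y). lra.
    + intros r. exists (2 * r). intros x y Hx Hy. simpl in *.
      pose proof (Htri x x0 y). rewrite (Hsym x0 y) in *. lra.
  - exists 1, 0. split; [lra|split; [lra|]]. intros x y. pose proof (Hg x y). lra.
  - apply (nonzero_norm_of_base_points d dRplus g x0 (half_point 0 (Rle_refl 0)) 1 0 Hd dRplus_metric);
      [lra|]. intros x. unfold dRplus. simpl. rewrite !Rminus_0_r, Rabs_pos_eq; [lra | apply Hpos].
Qed.

Lemma half_line_extension {X : Type} (d : X -> X -> R) (A : X -> Prop)
    (phi : {x | A x} -> Rplus_half) :
  is_metric d -> proper_space d -> closed_set d A -> morph_A (sub_dist d A) dRplus phi ->
  exists phibar : X -> Rplus_half,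
    morph_A d dRplus phibar /\
    (nonzero_norm (sub_dist d A) dRplus phi -> morph_tA d dRplus phibar) /\
    forall a, phibar (proj1_sig a) = phi a.
Proof.
  intros Hd Hp HA (Hcont & Hproper & lam & s & Hlam & Hs & Hlip).
  destruct (classic (inhabited {x | A x})) as [[a0]|nA].
  - set (phibar := ext_point X d A phi a0 lam s Hd HA Hlam Hs).
    exists phibar. split; [|split].
    + apply ext_point_morph_A; assumption.
    + intros Hnz. split; [apply ext_point_morph_A; assumption|].
      apply ext_point_nonzero_norm, Hnz.
    + apply ext_point_extends.
  - destruct (half_line_morph_tA_exists d Hd Hp) as [g Hg].
    exists g. split; [apply Hg|split; [intros _; exact Hg|]].
    intros a. exfalso. exact (nA (inhabits a)).
Qed.

Theorem theorem4p1 :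
  absolute_extensor (@morph_A) Rplus_half dRplus /\
  absolute_extensor (@morph_tA) Rplus_half dRplus.
Proof.
  split; intros X d Hd Hp A HA phi Hphi.
  - destruct (half_line_extension d A phi Hd Hp HA Hphi) as (phibar & Hmorph & _ & Hext).
    exists phibar. split; assumption.
  - destruct Hphi as [Hmorph Hnz].
    destruct (half_line_extension d A phi Hd Hp HA Hmorph) as (phibar & _ & Htilde & Hext).
    exists phibar. split; [apply Htilde, Hnz | exact Hext].
Qed.
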